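(* Let $m,k$ be positive integers and suppose $q^mt_1t_2\cdots t_k=1$ (i.e. regard $q,t_1,\ldots,t_{k-1}$ as independent variables and $t_k=q^{-m}(t_1\cdots t_{k-1})^{-1}$). Then $$\sum_{\text{cyclic permutations of }t_1,\ldots,t_k}\ \ \widetilde{\sum_{1\le i_1\le\cdots\le i_k\le m}}\ \left\{\begin{matrix}i_1,\ldots,i_k\\ t_1,\ldots,t_k\end{matrix}\right\}_m=\frac{m^{k-1}}{(k-1)!}.$$ In particular the left side is independent of $q,t_1,\ldots,t_k$.
   Context: $(a)_n:=\prod_{j=0}^{n-1}(1-aq^j)$ (so $(a)_0=1$). For integers $1\le i_1\le\cdots\le i_k\le m$, $$\left\{\begin{matrix}i_1,\ldots,i_k\\ t_1,\ldots,t_k\end{matrix}\right\}_m:=\frac{1}{(q)_{i_1-1}(q^{i_1}t_1)_{i_2-i_1}(q^{i_2}t_1t_2)_{i_3-i_2}\cdots(q^{i_k}t_1\cdots t_k)_{m-i_k}}.$$ For a function $f(i_1,\ldots,i_k)$, $\widetilde{\sum}_{1\le i_1\le\cdots\le i_k\le m}f:=\sum_{1\le i_1\le\cdots\le i_k\le m}f(i_1,\ldots,i_k)/\#\mathrm{Stab}(i_1,\ldots,i_k)$, where $\mathrm{Stab}(i_1,\ldots,i_k)$ is the set of permutations of $\{1,\ldots,k\}$ fixing the tuple (so its order is the product of factorials of the multiplicities). The outer sum runs over the $k$ cyclic rotations $(t_1,\ldots,t_k)\mapsto(t_{j+1},\ldots,t_k,t_1,\ldots,t_j)$, $0\le j<k$,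 applied to the variables in the summand. *)

From mathcomp Require Import all_boot all_order all_algebra.
Set Implicit Arguments. Unset Strict Implicit. Unset Printing Implicit Defensive.
Import GRing.Theory.
Local Open Scope ring_scope.

Definition qpoch (F : pzRingType) (q a : F) (n : nat) : F :=
  \prod_(j < n) (1 - a * q ^+ j).

(* Denominator of the symbol {i_1..i_k ; t_1..t_k}_m, for an index sequence
   [ii] = [i_1; ...; i_k] (values in 1..m) and [ts] = [t_1; ...; t_k].
   Convention i_{k+1} := m (obtained via the default of nth). *)
Definition symb_den (F : pzRingType) (m : nat) (q : F) (ii : seq nat) (ts : seq F) : F :=
  qpoch q q (nth m ii 0).-1 *
  \prod_(j < size ts)
     qpoch q (q ^+ (nth m ii j) * \prod_(l < j.+1) nth 0 ts l)
           (nth m ii j.+1 - nth m ii j).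

Definition symb (F : fieldType) (m : nat) (q : F) (ii : seq nat) (ts : seq F) : F :=
  (symb_den m q ii ts)^-1.

(* Order of the stabilizer of a tuple: product of factorials of multiplicities *)
Definition stab_card (m : nat) (s : seq 'I_m) : nat :=
  \prod_(x : 'I_m) (count_mem x s)`!.

(* Indices 1 <= i_1 <= ... <= i_k <= m, encoded as s : k.-tuple 'I_m
   (nondecreasing) with i_j = s_j + 1. *)
Definition idx (m : nat) (s : seq 'I_m) : seq nat := map (fun x : 'I_m => (val x).+1) s.

Definition tsum (F : fieldType) (m k : nat) (q : F) (ts : seq F) : F :=
  \sum_(s : k.-tuple 'I_m | sorted leq (map val s))
     ((stab_card s)%:R)^-1 * symb m q (idx s) ts.

Definition cyc_tsum (F : fieldType) (m k : nat) (q : F) (ts : seq F) : F :=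
  \sum_(j < k) tsum m k q (rot j ts).

(* Since a nondecreasing index tuple has k!/#Stab rearrangements, each tilde-sum is 1/k! times
   a sum over all k-tuples t of indices in {0, ..., m-1}, and the denominator attached to t and
   to the rotation j of (t_1, ..., t_k) is a product over the levels 1 <= p < m which only sees
   how many entries of t lie below p.  Shifting every entry of t by -s modulo m, while advancing
   the rotation by the number of entries below s, permutes the pairs (j, t); since
   q^m t_1 ... t_k = 1 the shifted denominator is prod_(p <> s) (1 - Y_p / Y_s) for weights
   Y_p = q^p t_(j+1) ... t_(j+c_p) attached to (j, t).  Comparing leading coefficients in the
   Lagrange interpolation of X^(m-1) at the Y_p shows that these m reciprocals sum to 1, so
   m times the total sum is the number k m^k of pairs, and the left side is
   k m^(k-1) / k! = m^(k-1) / (k-1)!. *)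

From mathcomp Require Import all_boot all_order all_algebra.
From mathcomp Require Import zify ring.
Set Implicit Arguments. Unset Strict Implicit. Unset Printing Implicit Defensive.
Import Order.TTheory GRing.Theory.

Section Rearrangements.
Variable T : finType.

Lemma sum_count_mem_undup (s : seq T) : \sum_(x <- undup s) count_mem x s = size s.
Proof.
rewrite -(perm_size (perm_count_undup s)) size_flatten /shape -map_comp sumnE big_map.
by apply: eq_bigr => x _; rewrite /= size_nseq.
Qed.

Lemma prod_fact_count_rem (s : seq T) x : x \in s ->
  \prod_(y : T) (count_mem y s)`! =
  count_mem x s * \prod_(y : T) (count_mem y (rem x s))`!.
Proof.
move=> xs; rewrite (bigD1 x) //= [in RHS](bigD1 x) //= mulnA count_mem_rem eqxx.
have : 0 < count_mem x s by rewrite -has_count has_pred1.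
case: (count_mem x s) => // n _; rewrite factS subn1; congr (_ * _).
by apply: eq_bigr => y /negPf yx; rewrite count_mem_rem eq_sym yx subn0.
Qed.

Lemma size_permutations_mul_prod_fact (s : seq T) :
  size (permutations s) * \prod_(x : T) (count_mem x s)`! = (size s)`!.
Proof.
move Dn: (size s) => n; elim: n s Dn => [|n IHn] s Dn.
  by case: s Dn => // _; rewrite big1.
rewrite (perm_size (permutationsE _)) ?Dn // size_allpairs_dep sumnE big_map.
rewrite big_distrl /= (eq_big_seq (fun x => n`! * count_mem x s)); last first.
  move=> x; rewrite mem_undup => xs.
  by rewrite (prod_fact_count_rem xs) mulnCA IHn 1?mulnC // size_rem // Dn.
by rewrite -big_distrr /= sum_count_mem_undup Dn factS mulnC.
Qed.

Lemma card_perm_eq_tuple k (s : k.-tuple T) :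
  #|[pred t : k.-tuple T | perm_eq t s]| * \prod_(x : T) (count_mem x s)`! = k`!.
Proof.
rewrite -[in RHS](size_tuple s) -size_permutations_mul_prod_fact; congr (_ * _).
rewrite cardE -(size_map val); apply: perm_size; apply: uniq_perm.
- by rewrite map_inj_uniq ?enum_uniq //; apply: val_inj.
- exact: permutations_uniq.
move=> t; rewrite mem_permutations; apply/mapP/idP => [[u]|t_perm].
  by rewrite mem_enum /= => ? ->.
have st : size t == k by rewrite (perm_size t_perm) size_tuple.
by exists (Tuple st); rewrite // mem_enum.
Qed.

End Rearrangements.

Definition count_lt m (s : seq 'I_m) (p : nat) : nat := count (fun x : 'I_m => x < p) s.

Definition ord_shift m (m_gt0 : 0 < m) (s : nat) (x : 'I_m) : 'I_m :=
  Ordinal (ltn_pmod (x + (m - s)) m_gt0).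

Lemma ord_shift_inj m (m_gt0 : 0 < m) (s : 'I_m) : injective (ord_shift m_gt0 s).
Proof.
move=> x y /(congr1 val) /eqP; rewrite /= eqn_modDr !modn_small // => /eqP.
exact: val_inj.
Qed.

Lemma ord_shift_val m (m_gt0 : 0 < m) (s : 'I_m) (x : 'I_m) :
  ord_shift m_gt0 s x = (if s <= x then x - s else x + (m - s)) :> nat.
Proof.
have := ltn_ord x; have := ltn_ord s; rewrite /=; case: (leqP s x) => sx s_lt x_lt.
  have -> : x + (m - s) = x - s + m by lia.
  by rewrite modnDr modn_small; lia.
by rewrite modn_small; lia.
Qed.

(* Subtracting s modulo m sends the entries below s to the top, where they are counted
   once more when the threshold s + p wraps around. *)
Lemma count_lt_shift m (m_gt0 : 0 < m) (s : 'I_m) (t : seq 'I_m) p : p < m ->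
  count_lt (map (ord_shift m_gt0 s) t) p + count_lt t s
  = (s + p) %/ m * size t + count_lt t ((s + p) %% m).
Proof.
move=> p_lt; have s_lt := ltn_ord s.
have [d_eq r_eq] : (s + p) %/ m = (m <= s + p) /\ (s + p) %% m = s + p - (m <= s + p) * m.
  case: leqP => sp; last by rewrite divn_small ?modn_small ?subn0.
  have -> : s + p = 1 * m + (s + p - m) by lia.
  by rewrite divnMDl // modnMDl divn_small ?modn_small //; lia.
rewrite d_eq r_eq /count_lt count_map; elim: t => [|x t IHt] /=; first by rewrite muln0.
rewrite -[(x + (m - s)) %% m]/(nat_of_ord (ord_shift m_gt0 s x)) ord_shift_val mulnS.
have := ltn_ord x; move: IHt.
by case: (leqP m (s + p)); case: (leqP s x); case: ltnP; case: ltnP; case: ltnP; lia.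
Qed.

Lemma big_nat1_addn_modn (R : Type) (idx : R) (op : Monoid.com_law idx) m (s : 'I_m)
    (G : nat -> R) :
  \big[op/idx]_(1 <= p < m) G ((s + p) %% m) = \big[op/idx]_(p < m | p != s) G p.
Proof.
have m_gt0 : 0 < m := leq_ltn_trans (leq0n s) (ltn_ord s).
pose h (p : 'I_m) : 'I_m := Ordinal (ltn_pmod (s + p) m_gt0).
have h_inj : injective h.
  move=> a b /(congr1 val) /eqP; rewrite /= eqn_modDl !modn_small // => /eqP.
  exact: val_inj.
rewrite (reindex_inj h_inj) /=.
rewrite (eq_bigl (fun p : 'I_m => p != 0 :> nat)); last first.
  move=> p; rewrite -(inj_eq val_inj) /= -[X in _ == X](modn_small (ltn_ord s)).
  by rewrite -{2}[val s]addn0 eqn_modDl !modn_small.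
rewrite -(big_mkord (fun p => p != 0) (fun p => G ((s + p) %% m))) [RHS]big_ltn_cond //=.
rewrite [LHS]big_nat_cond [RHS]big_nat_cond; apply: eq_bigl => p.
by rewrite andbT; apply/esym/andb_idr => /andP[p_gt0 _]; rewrite -lt0n.
Qed.

Local Open Scope ring_scope.

Lemma sum_inv_prod_one_sub_ratio (F : fieldType) n (y : 'I_n -> F) :
  (0 < n)%N -> injective y -> (forall i, y i != 0) ->
  \sum_(s < n) (\prod_(p < n | p != s) (1 - y p / y s))^-1 = 1.
Proof.
move=> n_gt0 y_inj y_neq0.
pose P s := \prod_(p < n | p != s) ('X - (y p)%:P).
have hornerP s u : (P s).[y u] = \prod_(p < n | p != s) (y u - y p).
  by rewrite horner_prod; apply: eq_bigr => p _; rewrite hornerXsubC.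
have P_neq0 s : (P s).[y s] != 0.
  rewrite hornerP; apply/prodf_neq0 => p ps; rewrite subr_eq0.
  by apply: contra ps => /eqP/y_inj ->.
have size_P s : size (P s) = n.
  rewrite size_prod => [|p _]; last by rewrite polyXsubC_eq0.
  rewrite (eq_bigr (fun=> 2)) => [|p _]; last by rewrite size_XsubC.
  rewrite sum_nat_const cardC1 card_ord; lia.
have lead_P s : (P s)`_n.-1 = 1.
  have := lead_coef_prod_XsubC (index_enum 'I_n) (fun p => p != s) y.
  by rewrite /lead_coef -/(P s) size_P.
pose c s := y s ^+ n.-1 / (P s).[y s].
pose Q := \sum_(s < n) c s *: P s.
have Q_eq : Q - 'X^(n.-1) = 0.
  apply: (@roots_geq_poly_eq0 _ _ [seq y u | u <- enum 'I_n]).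
  - apply/allP => _ /mapP[u _ ->]; rewrite /root hornerD hornerN hornerXn subr_eq0.
    rewrite /Q horner_sum (bigD1 u) //= big1 ?addr0; first by rewrite hornerZ /c mulfVK.
    by move=> s su; rewrite hornerZ hornerP (bigD1 u) 1?eq_sym //= subrr mul0r mulr0.
  - by rewrite map_inj_uniq ?enum_uniq.
  - rewrite size_map size_enum_ord (leq_trans (size_polyD _ _)) // geq_max size_polyN.
    rewrite size_polyXn prednK // leqnn andbT (leq_trans (size_sum _ _ _)) //.
    by apply/bigmax_leqP => s _; rewrite (leq_trans (size_scale_leq _ _)) // size_P.
have : (Q - 'X^(n.-1))`_n.-1 = 0 by rewrite Q_eq coef0.
rewrite coefB coefXn eqxx /Q coef_sum => /eqP; rewrite subr_eq0 => /eqP sum_eq.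
rewrite -[RHS]/(true%:R) -sum_eq.
apply: eq_bigr => s _; rewrite coefZ lead_P mulr1 /c hornerP.
rewrite (eq_bigr (fun p => (y s - y p) / y s)); last by move=> p _; rewrite mulrBl divff.
by rewrite prodf_div prodr_const cardC1 card_ord /= invf_div.
Qed.

Lemma nth_rot (T : Type) (x0 : T) (s : seq T) j l :
  (j <= size s)%N -> (l < size s)%N -> nth x0 (rot j s) l = nth x0 s ((j + l) %% size s).
Proof.
move=> js ls; rewrite /rot nth_cat size_drop; case: ltnP => jl.
  by rewrite nth_drop modn_small //; lia.
rewrite nth_take; last by lia.
have -> : (j + l = l - (size s - j) + size s)%N by lia.
by rewrite modnDr modn_small //; lia.
Qed.

Lemma qpoch_range (R : comPzRingType) (q a : R) (i j : nat) :
  qpoch q (q ^+ i * a) (j - i) = \prod_(i <= p < j) (1 - q ^+ p * a).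
Proof.
rewrite /qpoch -[in RHS](add0n i) big_addn big_mkord.
by apply: eq_bigr => p _; rewrite exprD; ring.
Qed.

(* Block [r] of the sorted sequence [ii] (between its r-th and (r+1)-th entries) consists of the
   p with exactly r+1 entries of [ii] at most p. *)
Lemma prod_sorted_blocks (R : comPzRingType) (g : nat -> nat -> R) (M : nat) (ii : seq nat)
    (a c : nat) :
  sorted leq ii -> all (leq a) ii -> all (geq M) ii ->
  \prod_(a <= p < head M ii) g c p *
  \prod_(r < size ii) \prod_(nth M ii r <= p < nth M ii r.+1) g (c + r.+1)%N p
  = \prod_(a <= p < M) g (c + count (leq^~ p) ii)%N p.
Proof.
elim: ii a c => [|i ii IHii] a c /=.
  by move=> _ _ _; rewrite big_ord0 mulr1; apply: eq_bigr => p _; rewrite addn0.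
move=> ii_path /andP[ai a_ii] /andP[iM M_ii].
have i_ii : all (leq i) ii by apply: order_path_min ii_path; apply: leq_trans.
rewrite big_ord_recl nth0 addn1.
rewrite (eq_bigr (fun r : 'I_(size ii) =>
  \prod_(nth M ii r <= p < nth M ii r.+1) g (c.+1 + r.+1)%N p)); last first.
  by move=> r _; rewrite /= /bump /= add1n addSnnS.
rewrite IHii ?(path_sorted ii_path) // [RHS](@big_cat_nat _ _ _ i) //=; congr (_ * _).
  apply: eq_big_nat => p /andP[_ pi]; rewrite leqNgt pi /= add0n; congr (g _ _).
  apply/eqP; rewrite -{1}[c]addn0 eqn_add2l eq_sym -leqn0 leqNgt -has_count.
  by apply/hasPn => x /(allP i_ii) ix; rewrite -ltnNge (leq_trans pi ix).
by apply: eq_big_nat => p /andP[ip _]; rewrite ip; congr (g _ _); lia.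
Qed.

Section CyclicProducts.
Variable R : pzRingType.
Implicit Type ts : seq R.

Definition cycprod ts (a n : nat) : R := \prod_(l < n) nth 0 ts ((a + l) %% size ts).

Lemma cycprodD ts a n1 n2 :
  cycprod ts a (n1 + n2) = cycprod ts a n1 * cycprod ts (a + n1) n2.
Proof. by rewrite /cycprod big_split_ord; congr (_ * _); apply: eq_bigr => l _; rewrite addnA. Qed.

Lemma cycprod_modn ts a n : cycprod ts (a %% size ts) n = cycprod ts a n.
Proof. by apply: eq_bigr => l _; rewrite modnDml. Qed.

Lemma cycprod0_size ts : cycprod ts 0 (size ts) = \prod_(t <- ts) t.
Proof.
rewrite (big_nth 0) big_mkord; apply: eq_bigr => l _.
by rewrite add0n modn_small.
Qed.

Lemma cycprod0_mul_size ts d n :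
  cycprod ts 0 (d * size ts + n) = (\prod_(t <- ts) t) ^+ d * cycprod ts 0 n.
Proof.
elim: d => [|d IHd]; first by rewrite mul1r.
rewrite mulSn -addnA cycprodD cycprod0_size add0n -cycprod_modn modnn IHd.
by rewrite exprS mulrA.
Qed.

End CyclicProducts.

Lemma cycprod_neq0 (F : fieldType) (ts : seq F) a n : (0 < size ts)%N ->
  \prod_(t <- ts) t != 0 -> cycprod ts a n != 0.
Proof.
move=> ts_gt0; rewrite prodf_seq_neq0 => /allP ts_neq0; apply/prodf_neq0 => l _.
by apply: ts_neq0; rewrite mem_nth // ltn_pmod.
Qed.

(* The denominator of the symbol for the indices i_r = s_r + 1 and the parameters rotated by j,
   regrouped by the levels 1 <= p < m (see symb_den_rot). *)
Definition cyc_den (R : pzRingType) m (q : R) (ts : seq R) (j : nat) (s : seq 'I_m) : R :=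
  \prod_(1 <= p < m) (1 - q ^+ p * cycprod ts j (count_lt s p)).

Lemma cyc_den_perm (R : pzRingType) m (q : R) ts j (s1 s2 : seq 'I_m) :
  perm_eq s1 s2 -> cyc_den q ts j s1 = cyc_den q ts j s2.
Proof. by move=> /permP s12; apply: eq_bigr => p _; rewrite /count_lt s12. Qed.

Lemma symb_den_rot (R : comPzRingType) m (q : R) (ts : seq R) j (s : seq 'I_m) :
  (j <= size ts)%N -> size s = size ts -> sorted leq (map val s) ->
  symb_den m q (idx s) (rot j ts) = cyc_den q ts j s.
Proof.
move=> j_le size_s s_sorted; rewrite /symb_den size_rot.
have size_idx : size (idx s) = size ts by rewrite size_map.
have -> : qpoch q q (nth m (idx s) 0).-1 =
          \prod_(1 <= p < head m (idx s)) (1 - q ^+ p * cycprod ts j 0).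
  by rewrite -qpoch_range /cycprod big_ord0 expr1 !mulr1 subn1 nth0.
rewrite -size_idx (eq_bigr (fun r : 'I_(size (idx s)) =>
  \prod_(nth m (idx s) r <= p < nth m (idx s) r.+1) (1 - q ^+ p * cycprod ts j (0 + r.+1)))).
  rewrite (prod_sorted_blocks (fun c p => 1 - q ^+ p * cycprod ts j c)).
  - by apply: eq_bigr => p _; rewrite add0n /idx count_map.
  - by move: s_sorted; rewrite /idx !sorted_map; apply: sub_sorted => x y /=; rewrite ltnS.
  - by apply/allP => _ /mapP[x _ ->].
  - by apply/allP => _ /mapP[x _ ->]; apply: ltn_ord.
move=> r _; rewrite -qpoch_range add0n; congr (qpoch _ (_ * _) _).
apply: eq_bigr => l _; rewrite nth_rot //.
have := ltn_ord r; rewrite [X in (_ < X)%N -> _]size_idx; exact: leq_trans (ltn_ord l).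
Qed.

Lemma natf_neq0_pchar0 (F : fieldType) n :
  [pchar F] =i pred0 -> (0 < n)%N -> n%:R != 0 :> F.
Proof. by move=> F0 n_gt0; rewrite ((pcharf0P F).1 F0 n) -lt0n. Qed.

Lemma sorted_map_val_leq m (s : seq 'I_m) : sorted leq (map val s) = sorted <=%O s.
Proof. by rewrite sorted_map leEord. Qed.

Lemma sort_tuple_eq_perm m k (t s : k.-tuple 'I_m) : sorted <=%O s ->
  (sort_tuple <=%O t == s) = perm_eq t s.
Proof.
move=> s_sorted; apply/eqP/idP => [<-|ts]; first by rewrite /= perm_sym perm_sort.
apply: val_inj; apply: (sorted_eq le_trans le_anti) => //=.
  exact: sort_sorted le_total _.
by rewrite perm_sort.
Qed.

Lemma tsum_rot (F : fieldType) m k (q : F) (ts : seq F) j :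
  [pchar F] =i pred0 -> size ts = k -> (j <= k)%N ->
  tsum m k q (rot j ts) = (k`!%:R)^-1 * \sum_(t : k.-tuple 'I_m) (cyc_den q ts j t)^-1.
Proof.
move=> F0 size_ts j_le.
rewrite (partition_big (sort_tuple <=%O) (fun s : k.-tuple 'I_m => sorted leq (map val s)));
  last by move=> t _; rewrite sorted_map_val_leq sort_sorted //; apply: le_total.
rewrite /tsum big_distrr; apply: eq_bigr => s s_sorted /=.
rewrite (eq_bigl (fun t : k.-tuple 'I_m => perm_eq t s)); last first.
  by move=> t; rewrite sort_tuple_eq_perm -?sorted_map_val_leq.
rewrite (eq_bigr (fun _ => (cyc_den q ts j s)^-1)); last by move=> t /cyc_den_perm ->.
have stab_neq0 : (stab_card s)%:R != 0 :> F.
  by apply: natf_neq0_pchar0 => //; apply: prodn_gt0 => i; apply: fact_gt0.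
have card_class : #|[pred t : k.-tuple 'I_m | perm_eq t s]|%:R = k`!%:R / (stab_card s)%:R :> F.
  by rewrite -(card_perm_eq_tuple s) natrM mulfK.
rewrite sumr_const -[_ *+ #|_|]mulr_natr (eq_card (B := [pred t : k.-tuple 'I_m | perm_eq t s])) //.
rewrite card_class /symb symb_den_rot ?size_tuple ?size_ts //.
by rewrite mulrCA mulKf ?natf_neq0_pchar0 ?fact_gt0 // mulrC.
Qed.

Section ShiftAction.
Variables (F : fieldType) (m k : nat) (q : F) (ts : seq F).
Hypotheses (m_gt0 : (0 < m)%N) (k_gt0 : (0 < k)%N) (size_ts : size ts = k).
Hypothesis qm_prod : q ^+ m * \prod_(t <- ts) t = 1.

Let prod_neq0 : \prod_(t <- ts) t != 0.
Proof. by apply: contra_eq_neq qm_prod => ->; rewrite mulr0 eq_sym oner_neq0. Qed.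

Let q_neq0 : q != 0.
Proof.
by apply: contra_eq_neq qm_prod => ->; rewrite expr0n gtn_eqF // mul0r eq_sym oner_neq0.
Qed.

Let weight (j : nat) (t : seq 'I_m) (p : nat) : F := q ^+ p * cycprod ts 0 (j + count_lt t p).

Let weight_neq0 j t p : weight j t p != 0.
Proof. by rewrite mulf_neq0 ?expf_neq0 ?cycprod_neq0 ?size_ts. Qed.

(* Write s + p = d m + r: the factor q^(d m) of q^(s+p) pairs with the d extra full turns
   (t_1...t_k)^d of the cyclic product, and q^m t_1...t_k = 1. *)
Lemma cycprod_shift_ratio j (t : seq 'I_m) (s : 'I_m) p : (p < m)%N -> size t = k ->
  q ^+ p * cycprod ts ((j + count_lt t s) %% k) (count_lt (map (ord_shift m_gt0 s) t) p)
  = weight j t ((s + p) %% m) / weight j t s.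
Proof.
move=> p_lt size_t; rewrite -size_ts cycprod_modn.
set c := count_lt t s; set c' := count_lt _ p.
have split_c : cycprod ts (j + c) c' = cycprod ts 0 (j + c + c') / cycprod ts 0 (j + c).
  by rewrite [in RHS]cycprodD add0n mulrC mulKf ?cycprod_neq0 ?size_ts.
have turns : (j + c + c' = (s + p) %/ m * size ts + (j + count_lt t ((s + p) %% m)))%N.
  by rewrite size_ts -size_t -addnA [(c + c')%N]addnC count_lt_shift // addnCA.
rewrite split_c turns cycprod0_mul_size /weight.
have qp : q ^+ p = (q ^+ m) ^+ ((s + p) %/ m) * q ^+ ((s + p) %% m) / q ^+ s.
  by rewrite -exprM -exprD mulnC -divn_eq exprD mulrC mulKf ?expf_neq0.
have qm : q ^+ m = (\prod_(t <- ts) t)^-1.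
  by apply: (mulIf prod_neq0); rewrite qm_prod mulVf.
by rewrite qp qm exprVn; field; rewrite !expf_neq0 ?cycprod_neq0 ?size_ts.
Qed.

Lemma cyc_den_shift j (t : seq 'I_m) (s : 'I_m) : size t = k ->
  cyc_den q ts ((j + count_lt t s) %% k) (map (ord_shift m_gt0 s) t)
  = \prod_(p < m | p != s) (1 - weight j t p / weight j t s).
Proof.
move=> size_t; rewrite -(big_nat1_addn_modn _ s (fun p => 1 - weight j t p / weight j t s)).
by apply: eq_big_nat => p /andP[_ p_lt]; rewrite cycprod_shift_ratio.
Qed.

Definition shift_pair (s : 'I_m) (x : 'I_k * k.-tuple 'I_m) : 'I_k * k.-tuple 'I_m :=
  (Ordinal (ltn_pmod (x.1 + count_lt x.2 s) k_gt0), map_tuple (ord_shift m_gt0 s) x.2).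

Lemma shift_pair_inj s : injective (shift_pair s).
Proof.
move=> [i t] [j u] [ij tu].
have {}tu : t = u by apply/val_inj/(inj_map (@ord_shift_inj _ m_gt0 s)).
subst u; congr pair; apply: val_inj; move: ij => /eqP.
by rewrite eqn_modDr !modn_small // => /eqP.
Qed.

Hypothesis cyc_den_neq0 : forall (j : 'I_k) (t : k.-tuple 'I_m), cyc_den q ts j t != 0.

Lemma sum_inv_cyc_den_shift_pair x :
  \sum_(s < m) (cyc_den q ts (shift_pair s x).1 (shift_pair s x).2)^-1 = 1.
Proof.
case: x => j t /=; under eq_bigr do rewrite cyc_den_shift ?size_tuple //.
apply: sum_inv_prod_one_sub_ratio => // a b ab; apply/eqP; apply: contraT => a_neq_b.
have := cyc_den_neq0 (shift_pair b (j, t)).1 (shift_pair b (j, t)).2.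
by rewrite /= cyc_den_shift ?size_tuple // (bigD1 a) //= ab divff // subrr mul0r eqxx.
Qed.

Lemma sum_inv_cyc_den_pairs :
  m%:R * \sum_(x : 'I_k * k.-tuple 'I_m) (cyc_den q ts x.1 x.2)^-1 = (k * m ^ k)%:R.
Proof.
transitivity (\sum_(s < m) \sum_(x : 'I_k * k.-tuple 'I_m) (cyc_den q ts x.1 x.2)^-1).
  by rewrite sumr_const card_ord mulr_natl.
rewrite (eq_bigr (fun s => \sum_x (cyc_den q ts (shift_pair s x).1 (shift_pair s x).2)^-1))
  => [|s _]; last exact: reindex_inj (@shift_pair_inj s).
rewrite exchange_big /= (eq_bigr (fun _ => 1)) => [|x _]; last exact: sum_inv_cyc_den_shift_pair.
by rewrite sumr_const card_prod card_ord card_tuple card_ord.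
Qed.

End ShiftAction.

Theorem theorem9p2 (F : fieldType) (HF : [pchar F] =i pred0)
  (m k : nat) (Hm : (0 < m)%N) (Hk : (0 < k)%N)
  (q : F) (ts : k.-tuple F)
  (Hprod : q ^+ m * \prod_(t <- ts) t = 1)
  (Hden : forall (j : 'I_k) (s : k.-tuple 'I_m), sorted leq (map val s) ->
            symb_den m q (idx s) (rot j ts) != 0) :
  cyc_tsum m k q ts = (m ^ k.-1)%:R / (k.-1)`!%:R.
Proof.
have den_neq0 (j : 'I_k) (t : k.-tuple 'I_m) : cyc_den q ts j t != 0.
  have t_perm : perm_eq (sort <=%O t) t by rewrite perm_sort.
  have t_sorted : sorted leq (map val (sort_tuple <=%O t)).
    by rewrite sorted_map_val_leq sort_sorted //; apply: le_total.
  have j_le : (j <= size ts)%N by rewrite size_tuple ltnW.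
  have := Hden j _ t_sorted; rewrite symb_den_rot //; last by rewrite !size_tuple.
  by rewrite (cyc_den_perm q ts j t_perm).
rewrite /cyc_tsum.
under eq_bigr => j _ do rewrite (tsum_rot m q HF (size_tuple ts) (ltnW (ltn_ord j))).
rewrite -big_distrr /= pair_big /=.
have m_neq0 : m%:R != 0 :> F by apply: natf_neq0_pchar0.
have -> : \sum_(x : 'I_k * k.-tuple 'I_m) (cyc_den q ts x.1 x.2)^-1 = (k * m ^ k.-1)%:R.
  apply: (mulfI m_neq0); rewrite sum_inv_cyc_den_pairs ?size_tuple // -natrM.
  by rewrite mulnCA -expnS prednK.
rewrite -[in k`!](prednK Hk) factS prednK // !natrM.
by field; rewrite !natf_neq0_pchar0 ?fact_gt0.
Qed.
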